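(* There exists $N$ such that for all $n\ge N$ and all integers $k$ with $0\le k\le\frac{1}{20}\sqrt{n}$ the following holds. Let $G$ and $H$ be graphs on $n$ vertices, and let $\mathcal{C}$ be a multiset of $n-k$ unlabelled graphs on $n-1$ vertices such that $\mathcal{C}$ is a sub-multiset of both $\mathcal{D}(G)$ and $\mathcal{D}(H)$. Then $e(G)=e(H)$. (That is, the number of edges of a graph on $n$ vertices is reconstructible from any $n-k$ of its cards.)
   Context: All graphs are finite, simple and undirected. For a graph $G$ and $v\in V(G)$, the card $G-v$ is the graph obtained by deleting $v$ and all edges incident to it. The deck $\mathcal{D}(G)$ is the multiset of the $n=|V(G)|$ cards $G-v$, $v\in V(G)$, each considered up to isomorphism. $e(G)$ denotes the number of edges of $G$. *)

From mathcomp Require Import all_boot all_fingroup.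
Set Implicit Arguments. Unset Strict Implicit. Unset Printing Implicit Defensive.

Definition simple_graph (n : nat) (G : rel 'I_n) : Prop :=
  symmetric G /\ irreflexive G.

Definition nedges (n : nat) (G : rel 'I_n) : nat :=
  #|[set p : 'I_n * 'I_n | (p.1 < p.2) && G p.1 p.2]|.

(* The card G - v, with the remaining vertices relabelled by 'I_m via lift v. *)
Definition card_del (m : nat) (G : rel 'I_m.+1) (v : 'I_m.+1) : rel 'I_m :=
  fun i j => G (lift v i) (lift v j).

(* Graph isomorphism (equality of unlabelled graphs). *)
Definition graph_iso (m : nat) (G1 G2 : rel 'I_m) : Prop :=
  exists p : {perm 'I_m}, forall i j, G1 i j = G2 (p i) (p j).

From Stdlib Require Import ZArith Lia.
From mathcomp Require Import all_boot all_fingroup zify.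
Set Implicit Arguments. Unset Strict Implicit. Unset Printing Implicit Defensive.

(* If [e(G) > e(H)], comparing [e(G - v) = e(G) - deg v] on the shared cards shows that every
   matched vertex of [G] has larger degree than its partner in [H].  Let [F y] be the number of
   vertices of degree at least [y] in [G] minus that in [H].  Deleting [v] lowers exactly the
   degrees of the neighbours of [v]; summing this over the [n - k] shared cards gives, for every
   [y], two-sided linear relations between [F y] and [F y.+1] with coefficients of order [n] and
   error [O(k^2)].  As [F 0 = 0] and a zero of [F] beyond [2k^2 + 2k] propagates, the first
   nonzero value of [F] occurs early; from there [|F|] at least doubles at each step for [n/4]
   steps, exceeding [n].  So [F = 0], whence [e(G) = e(H)] since [sum_y F y = 2 (e(G) - e(H))]. *)

Section DegreeCounts.
Variable T : finType.
Implicit Types (G : rel T) (P : pred T).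

Definition deg G u := #|[set w | G u w]|.
Definition num_deg_ge G y := #|[set u | y <= deg G u]|.
Definition num_deg_eq G y := #|[set u | deg G u == y]|.
Definition nbrs_deg_eq G v y := #|[set u | G v u && (deg G u == y)]|.

Lemma card_set_sum P : #|[set u | P u]| = \sum_u (P u : nat).
Proof. by rewrite -sum1dep_card big_mkcond; apply: eq_bigr => u _; case: (P u). Qed.

Lemma num_deg_geE G y : num_deg_ge G y = \sum_u (y <= deg G u : nat).
Proof. exact: card_set_sum. Qed.

Lemma nbrs_deg_eqE G v y : nbrs_deg_eq G v y = \sum_u (G v u && (deg G u == y) : nat).
Proof. exact: card_set_sum. Qed.

Lemma num_deg_geS G y : num_deg_ge G y = num_deg_eq G y + num_deg_ge G y.+1.
Proof.
rewrite /num_deg_ge /num_deg_eq !card_set_sum -big_split; apply: eq_bigr => u _ /=.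
by case: (ltngtP y (deg G u)).
Qed.

Lemma num_deg_ge_max G y : num_deg_ge G y <= #|T|.
Proof. exact: max_card. Qed.

Lemma num_deg_ge0 G : num_deg_ge G 0 = #|T|.
Proof. by apply: eq_card => u; rewrite inE. Qed.

End DegreeCounts.

Section InjectiveCount.
Variables (T I : finType) (f : I -> T).
Hypothesis f_inj : injective f.
Implicit Types (G : rel T) (P : pred T).

Lemma sum_inj_le_card P : \sum_i (P (f i) : nat) <= #|[set u | P u]|.
Proof.
rewrite -(card_set_sum (fun i => P (f i))) -(card_imset _ f_inj).
by apply: subset_leq_card; apply/subsetP => u /imsetP [i]; rewrite !inE => Pi ->.
Qed.

Lemma card_le_sum_inj P : #|[set u | P u]| <= \sum_i (P (f i) : nat) + (#|T| - #|I|).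
Proof.
rewrite -(card_set_sum (fun i => P (f i))) -(card_imset _ f_inj).
have -> : #|T| - #|I| = #|~: (f @: [set: I])| by rewrite cardsCs setCK card_imset ?cardsT.
apply: leq_trans (leq_card_setU (f @: [set i | P (f i)]) _).1.
apply: subset_leq_card; apply/subsetP => u; rewrite !inE => Pu.
have [/imsetP [i _ def_u]|] := boolP (u \in f @: [set: I]); last by rewrite orbT.
by rewrite def_u imset_f // inE -def_u.
Qed.

Lemma sum_nbrs_deg_eq_inj G y : symmetric G ->
  \sum_i nbrs_deg_eq G (f i) y = \sum_u ((deg G u == y) * \sum_i (G u (f i) : nat)).
Proof.
move=> G_sym; rewrite /nbrs_deg_eq; under eq_bigr do rewrite card_set_sum.
rewrite exchange_big; apply: eq_bigr => u _; rewrite big_distrr; apply: eq_bigr => i _ /=.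
by rewrite G_sym; case: (G u (f i)); case: (deg G u == y).
Qed.

Lemma sum_nbrs_deg_eq_inj_le G y : symmetric G ->
  \sum_i nbrs_deg_eq G (f i) y <= y * num_deg_eq G y.
Proof.
move=> G_sym; rewrite sum_nbrs_deg_eq_inj // /num_deg_eq card_set_sum big_distrr.
apply: leq_sum => u _; case: (eqVneq (deg G u) y) => [<-|] /=; last by rewrite !muln0.
by rewrite mul1n muln1 (sum_inj_le_card (G u)).
Qed.

Lemma sum_nbrs_deg_eq_inj_ge G y : symmetric G ->
  y * num_deg_eq G y <= \sum_i nbrs_deg_eq G (f i) y + (#|T| - #|I|) * num_deg_eq G y.
Proof.
move=> G_sym; rewrite sum_nbrs_deg_eq_inj // /num_deg_eq card_set_sum !big_distrr -big_split.
apply: leq_sum => u _; case: (eqVneq (deg G u) y) => [<-|] /=; last by rewrite !muln0.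
by rewrite !mul1n !muln1 (card_le_sum_inj (G u)).
Qed.

End InjectiveCount.

Lemma sum_ord_leq n x : \sum_(y < n) (y <= x : nat) = minn n x.+1.
Proof.
elim: n => [|n IHn]; first by rewrite big_ord0 min0n.
by rewrite big_ord_recr /= IHn; case: (leqP n x) => le_nx; lia.
Qed.

Lemma sum_ord_eq n x : \sum_(y < n) (x == y :> nat : nat) = (x < n).
Proof.
elim: n => [|n IHn]; first by rewrite big_ord0.
by rewrite big_ord_recr /= IHn ltnS; case: (ltngtP x n).
Qed.

Lemma lin_lt_exp2 j : 5 <= j -> 4 * j + 3 < 2 ^ j.
Proof.
elim: j => // j IHj; rewrite ltnS leq_eqVlt => /predU1P [<- //|j_ge5].
by rewrite expnS; have := IHj j_ge5; lia.
Qed.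

Section Cards.
Variable m : nat.
Implicit Types G H : rel 'I_m.+1.

Lemma card_lift (v : 'I_m.+1) (P : pred 'I_m.+1) :
  #|[set j : 'I_m | P (lift v j)]| = #|[set w | (w != v) && P w]|.
Proof.
rewrite -(card_imset _ (@lift_inj _ v)); apply: eq_card => w; rewrite !inE.
case: (unliftP v w) => [j ->|->].
  by rewrite eq_sym neq_lift mem_imset ?inE //; exact: lift_inj.
by rewrite eqxx; apply/negbTE/imsetP => -[j _] /eqP; rewrite (negbTE (neq_lift v j)).
Qed.

Lemma deg_max G u : simple_graph G -> deg G u <= m.
Proof.
case=> _ G_irr; have : deg G u <= #|[set~ u]|.
  apply: subset_leq_card; apply/subsetP => w; rewrite !inE.
  by apply: contraTneq => ->; rewrite G_irr.
by rewrite cardsC1 card_ord.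
Qed.

Lemma deg_card_del G v j : simple_graph G ->
  deg (card_del G v) j + G (lift v j) v = deg G (lift v j).
Proof.
case=> _ G_irr; rewrite /deg (cardsD1 v [set w | G (lift v j) w]) inE addnC; congr (_ + _).
by rewrite (card_lift v (G (lift v j))); apply: eq_card => w; rewrite !inE.
Qed.

(* A vertex of [G - v] loses one degree exactly when it is a neighbour of [v]. *)
Lemma num_deg_ge_card_del G v y : simple_graph G ->
  num_deg_ge (card_del G v) y + (y <= deg G v) + nbrs_deg_eq G v y = num_deg_ge G y.
Proof.
move=> G_simple; have [G_sym G_irr] := G_simple.
have -> : num_deg_ge (card_del G v) y = #|[set w | (w != v) && (y + G w v <= deg G w)]|.
  rewrite /num_deg_ge -(card_lift v (fun w => y + G w v <= deg G w)); apply: eq_card => j.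
  by rewrite !inE -(deg_card_del v j G_simple) leq_add2r.
rewrite /num_deg_ge (cardsD1 v [set u | y <= deg G u]) inE.
rewrite -(cardsID [set u | G v u && (deg G u == y)] (_ :\ v)).
have -> : #|([set u | y <= deg G u] :\ v) :&: [set u | G v u && (deg G u == y)]|
          = nbrs_deg_eq G v y.
  apply: eq_card => u; rewrite !inE; case: (eqVneq u v) => [->|_] /=; first by rewrite G_irr.
  by case: (G v u) => /=; lia.
have -> : #|([set u | y <= deg G u] :\ v) :\: [set u | G v u && (deg G u == y)]|
          = #|[set w | (w != v) && (y + G w v <= deg G w)]|.
  apply: eq_card => u; rewrite !inE; case: (eqVneq u v) => [->|_] /=; first by rewrite G_irr.
  by rewrite (G_sym u v); case: (G v u) => /=; lia.
lia.
Qed.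

Lemma sum_nbrs_deg_eq G v : simple_graph G -> \sum_(y < m.+1) nbrs_deg_eq G v y = deg G v.
Proof.
move=> G_simple; under eq_bigr do rewrite nbrs_deg_eqE.
rewrite exchange_big /deg card_set_sum; apply: eq_bigr => u _ /=.
case: (G v u); last by rewrite big1.
by rewrite sum_ord_eq ltnS deg_max.
Qed.

Lemma sum_num_deg_ge G : simple_graph G ->
  \sum_(y < m.+1) num_deg_ge G y = \sum_u deg G u + m.+1.
Proof.
move=> G_simple; under [LHS]eq_bigr do rewrite num_deg_geE.
rewrite exchange_big -[X in _ + X](card_ord m.+1) -sum1_card -big_split.
apply: eq_bigr => u _ /=.
by rewrite sum_ord_leq addn1; apply/minn_idPr; rewrite ltnS deg_max.
Qed.

Lemma handshake G : simple_graph G -> \sum_u deg G u = 2 * nedges G.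
Proof.
case=> G_sym G_irr.
have -> : nedges G = \sum_(u : 'I_m.+1) \sum_(w : 'I_m.+1) (((u < w) && G u w) : nat).
  by rewrite /nedges card_set_sum pair_big; apply: eq_bigr => -[u w].
rewrite mul2n -addnn {2}exchange_big -big_split; apply: eq_bigr => u _.
rewrite /deg card_set_sum -big_split; apply: eq_bigr => w _ /=; rewrite (G_sym w u).
by case: (ltngtP u w) => [_|_|/val_inj->] /=; rewrite ?addn0 ?G_irr.
Qed.

Lemma sum_num_deg_ge_card_del G v : simple_graph G ->
  \sum_(y < m.+1) num_deg_ge G y
  = \sum_(y < m.+1) num_deg_ge (card_del G v) y + (deg G v).+1 + deg G v.
Proof.
move=> G_simple; under eq_bigr do rewrite -(num_deg_ge_card_del v _ G_simple).
rewrite !big_split /= sum_nbrs_deg_eq // sum_ord_leq.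
by congr (_ + _ + _); apply/minn_idPr; rewrite ltnS deg_max.
Qed.

Lemma nedges_deg_card_del G H v w : simple_graph G -> simple_graph H ->
  (forall y, num_deg_ge (card_del G v) y = num_deg_ge (card_del H w) y) ->
  nedges G + deg H w = nedges H + deg G v.
Proof.
move=> G_simple H_simple cards_eq.
have sums_eq : \sum_(y < m.+1) num_deg_ge (card_del G v) y
               = \sum_(y < m.+1) num_deg_ge (card_del H w) y by apply: eq_bigr.
have := sum_num_deg_ge_card_del v G_simple; have := sum_num_deg_ge_card_del w H_simple.
rewrite !sum_num_deg_ge ?handshake //; lia.
Qed.

End Cards.

Lemma iso_num_deg_ge n (G1 G2 : rel 'I_n) y :
  graph_iso G1 G2 -> num_deg_ge G1 y = num_deg_ge G2 y.
Proof.
case=> p iso_p; have deg_p i : deg G1 i = deg G2 (p i).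
  rewrite /deg -(card_preimset [set w | G2 (p i) w] (@perm_inj _ p)).
  by apply: eq_card => j; rewrite !inE iso_p.
rewrite /num_deg_ge -(card_preimset [set u | y <= deg G2 u] (@perm_inj _ p)).
by apply: eq_card => u; rewrite !inE deg_p.
Qed.

Section DegreeGap.
Variables (m k : nat) (G H : rel 'I_m.+1) (f g : 'I_(m.+1 - k) -> 'I_m.+1).
Hypotheses (G_simple : simple_graph G) (H_simple : simple_graph H).
Hypotheses (f_inj : injective f) (g_inj : injective g).
Hypothesis cards_eq :
  forall i y, num_deg_ge (card_del G (f i)) y = num_deg_ge (card_del H (g i)) y.
Hypothesis deg_gap : forall i, deg H (g i) < deg G (f i).
Hypothesis n_large : 20 <= m.+1.
Hypothesis k_small : 400 * (k * k) <= m.+1.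

Local Notation NG := (num_deg_ge G).
Local Notation NH := (num_deg_ge H).
Local Notation EG := (num_deg_eq G).
Local Notation EH := (num_deg_eq H).
Local Notation MG y := (\sum_i (y <= deg G (f i) : nat)).
Local Notation MH y := (\sum_i (y <= deg H (g i) : nat)).
Local Notation PG y := (\sum_i nbrs_deg_eq G (f i) y).
Local Notation PH y := (\sum_i nbrs_deg_eq H (g i) y).

Lemma k_linear : 400 * k <= m.+1.
Proof. by move: k_small; case: k => // k'; nia. Qed.

Lemma card_unmatched : #|'I_m.+1| - #|'I_(m.+1 - k)| = k.
Proof. by rewrite !card_ord subKn //; have := k_linear; lia. Qed.

(* [num_deg_ge_card_del] summed over the [m.+1 - k] shared cards, with [k * NG y] and
   [k * NH y] added to both sides to avoid truncated subtraction. *)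
Lemma card_balance y :
  m.+1 * NG y + MH y + PH y + k * NH y = m.+1 * NH y + MG y + PG y + k * NG y.
Proof.
have balance_i i : NG y + (y <= deg H (g i)) + nbrs_deg_eq H (g i) y
                 = NH y + (y <= deg G (f i)) + nbrs_deg_eq G (f i) y.
  by rewrite -(num_deg_ge_card_del (f i) y G_simple) -(num_deg_ge_card_del (g i) y H_simple)
             cards_eq; lia.
have : \sum_i (NG y + (y <= deg H (g i)) + nbrs_deg_eq H (g i) y)
     = \sum_i (NH y + (y <= deg G (f i)) + nbrs_deg_eq G (f i) y) by exact: eq_bigr.
rewrite !big_split /= !big_const_ord !iter_addn_0.
have k_le_n : k <= m.+1 by have := k_linear; lia.
have NGE : NG y * (m.+1 - k) + k * NG y = m.+1 * NG y by rewrite mulnC -mulnDl subnK.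
have NHE : NH y * (m.+1 - k) + k * NH y = m.+1 * NH y by rewrite mulnC -mulnDl subnK.
lia.
Qed.

Lemma PG_le y : PG y <= y * EG y.
Proof. exact: sum_nbrs_deg_eq_inj_le G_simple.1. Qed.

Lemma PG_ge y : y * EG y <= PG y + k * EG y.
Proof. by have := sum_nbrs_deg_eq_inj_ge f_inj y G_simple.1; rewrite card_unmatched. Qed.

Lemma PH_le y : PH y <= y * EH y.
Proof. exact: sum_nbrs_deg_eq_inj_le H_simple.1. Qed.

Lemma PH_ge y : y * EH y <= PH y + k * EH y.
Proof. by have := sum_nbrs_deg_eq_inj_ge g_inj y H_simple.1; rewrite card_unmatched. Qed.

Lemma MH_le_MG y : MH y <= MG y.
Proof. by apply: leq_sum => i _; have := deg_gap i; lia. Qed.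

Lemma MG_le_NG y : MG y <= NG y.
Proof. exact: (sum_inj_le_card f_inj (fun u => y <= deg G u)). Qed.

Lemma NH_le_MH y : NH y <= MH y + k.
Proof. by have := card_le_sum_inj g_inj (fun u => y <= deg H u); rewrite card_unmatched. Qed.

Lemma num_deg_eq_G_le y : EG y + MH y <= MG y + k.
Proof.
have := card_le_sum_inj f_inj (fun u => deg G u == y); rewrite card_unmatched.
have : \sum_i (deg G (f i) == y : nat) + MH y <= MG y.
  by rewrite -big_split; apply: leq_sum => i _ /=; have := deg_gap i; lia.
rewrite /num_deg_eq; lia.
Qed.

Lemma num_deg_eq_H_le y : EH y + MH y.+1 <= MG y.+1 + k.
Proof.
have := card_le_sum_inj g_inj (fun u => deg H u == y); rewrite card_unmatched.
have : \sum_i (deg H (g i) == y : nat) + MH y.+1 <= MG y.+1.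
  by rewrite -big_split; apply: leq_sum => i _ /=; have := deg_gap i; lia.
rewrite /num_deg_eq; lia.
Qed.

Definition excess y : Z := (Z.of_nat (NG y) - Z.of_nat (NH y))%Z.

Lemma excess_rec_ub y :
  ((Z.of_nat m.+1 - Z.of_nat k - Z.of_nat y - 1) * excess y
   + (Z.of_nat y - Z.of_nat k) * excess y.+1 <= 2 * Z.of_nat k * Z.of_nat k + Z.of_nat k)%Z.
Proof.
have := card_balance y; have := PG_le y; have := PH_ge y.
have := MG_le_NG y; have := NH_le_MH y.
have := MG_le_NG y.+1; have := NH_le_MH y.+1.
have NG_S := num_deg_geS G y; have NH_S := num_deg_geS H y.
have := leq_mul (leqnn k) (num_deg_eq_H_le y).
have := leq_mul (leqnn k) (MG_le_NG y.+1).
have := leq_mul (leqnn k) (NH_le_MH y.+1).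
have : y * NG y = y * EG y + y * NG y.+1 by rewrite NG_S mulnDr.
have : y * NH y = y * EH y + y * NH y.+1 by rewrite NH_S mulnDr.
have : k * NH y = k * EH y + k * NH y.+1 by rewrite NH_S mulnDr.
rewrite /excess; lia.
Qed.

Lemma excess_ub y :
  ((Z.of_nat m.+1 - Z.of_nat k - Z.of_nat y - 1) * excess y
   <= Z.of_nat k + 2 * Z.of_nat y * Z.of_nat k)%Z.
Proof.
have := card_balance y; have := PG_le y; have := PH_ge y.
have := MG_le_NG y; have := NH_le_MH y; have := num_deg_eq_G_le y.
have := leq_mul (leqnn y) (num_deg_eq_G_le y).
have := leq_mul (leqnn y) (MG_le_NG y).
have := leq_mul (leqnn y) (NH_le_MH y).
rewrite /excess; lia.
Qed.

Lemma excess_rec_lb y :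
  (- (2 * Z.of_nat k * Z.of_nat k)
   <= (Z.of_nat m.+1 - Z.of_nat y) * excess y + Z.of_nat y * excess y.+1)%Z.
Proof.
have := card_balance y; have := PG_ge y; have := PH_le y; have := MH_le_MG y.
have := MG_le_NG y; have := NH_le_MH y; have := num_deg_eq_G_le y.
have NG_S := num_deg_geS G y; have NH_S := num_deg_geS H y.
have := leq_mul (leqnn k) (num_deg_eq_G_le y).
have := leq_mul (leqnn k) (MG_le_NG y).
have := leq_mul (leqnn k) (NH_le_MH y).
have : y * NG y = y * EG y + y * NG y.+1 by rewrite NG_S mulnDr.
have : y * NH y = y * EH y + y * NH y.+1 by rewrite NH_S mulnDr.
have : k * NG y = k * EG y + k * NG y.+1 by rewrite NG_S mulnDr.
rewrite /excess; lia.
Qed.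

Lemma excess_abs_le y : (Z.abs (excess y) <= Z.of_nat m.+1)%Z.
Proof.
have := num_deg_ge_max G y; have := num_deg_ge_max H y.
by rewrite card_ord /excess; lia.
Qed.

Lemma excess_doubles y (M : Z) : 1 <= y -> 3 * y + 2 * (k * k) + k + 1 <= m.+1 ->
  (1 <= M)%Z -> (M <= Z.abs (excess y))%Z -> (2 * M <= Z.abs (excess y.+1))%Z.
Proof.
move=> y_pos y_small M_pos M_le; have := k_linear.
have [F_ge0|F_lt0] := Z.le_gt_cases 0 (excess y).
- case: (leqP y k) => [y_le_k|k_lt_y].
    have := @excess_ub y.
    have : (0 <= (excess y - 1) * (Z.of_nat m.+1 - Z.of_nat k - Z.of_nat y - 1))%Z.
      by apply: Z.mul_nonneg_nonneg; lia.
    have : (Z.of_nat y * Z.of_nat k <= Z.of_nat k * Z.of_nat k)%Z.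
      by apply: Z.mul_le_mono_nonneg_r; lia.
    lia.
  have := @excess_rec_ub y.
  have [|F1_gt] := Z.le_gt_cases (excess y.+1) (- (2 * M)); first by lia.
  have : (0 <= (Z.of_nat y - Z.of_nat k) * (excess y.+1 + 2 * M - 1))%Z.
    by apply: Z.mul_nonneg_nonneg; lia.
  have : (0 <= (Z.of_nat m.+1 - Z.of_nat k - Z.of_nat y - 1) * (excess y - M))%Z.
    by apply: Z.mul_nonneg_nonneg; lia.
  have : (0 <= (M - 1) * (Z.of_nat m.+1 - 3 * Z.of_nat y + Z.of_nat k - 1))%Z.
    by apply: Z.mul_nonneg_nonneg; lia.
  lia.
- have := @excess_rec_lb y.
  have [|F1_lt] := Z.le_gt_cases (2 * M) (excess y.+1); first by lia.
  have : (0 <= Z.of_nat y * (2 * M - 1 - excess y.+1))%Z.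
    by apply: Z.mul_nonneg_nonneg; lia.
  have : (0 <= (Z.of_nat m.+1 - Z.of_nat y) * (- M - excess y))%Z.
    by apply: Z.mul_nonneg_nonneg; lia.
  have : (0 <= (M - 1) * (Z.of_nat m.+1 - 3 * Z.of_nat y))%Z.
    by apply: Z.mul_nonneg_nonneg; lia.
  lia.
Qed.

Lemma excess_zero_propagates y : 2 * (k * k) + 2 * k < y ->
  excess y = 0%Z -> excess y.+1 = 0%Z.
Proof.
move=> y_large F0; have := @excess_rec_ub y; have := @excess_rec_lb y; rewrite F0.
have [F1_le0|F1_gt0] := Z.le_gt_cases (excess y.+1) 0.
  have [|F1_lt0] := Z.le_gt_cases 0 (excess y.+1); first by lia.
  have : (0 <= Z.of_nat y * (- excess y.+1 - 1))%Z by apply: Z.mul_nonneg_nonneg; lia.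
  lia.
have : (0 <= (Z.of_nat y - Z.of_nat k) * (excess y.+1 - 1))%Z.
  by apply: Z.mul_nonneg_nonneg; lia.
lia.
Qed.

Lemma num_deg_ge_eq y : NG y = NH y.
Proof.
apply/eqP/contraT => neq_y; have k_lin := k_linear.
have [y1 neq_y1 y1_min] := ex_minnP (ex_intro (fun y => NG y != NH y) y neq_y).
have y1_pos : 0 < y1 by case: (posnP y1) neq_y1 => // ->; rewrite !num_deg_ge0 eqxx.
have y1_small : y1 <= 2 * (k * k) + 2 * k + 1.
  rewrite leqNgt; apply/negP => y1_large.
  have F0 : excess y1.-1 = 0%Z.
    have [/y1_min|/negPn/eqP] := boolP (NG y1.-1 != NH y1.-1); first by lia.
    by rewrite /excess => ->; lia.
  have y1_pred_large : 2 * (k * k) + 2 * k < y1.-1 by lia.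
  have := excess_zero_propagates y1_pred_large F0.
  by rewrite prednK // /excess; move: neq_y1 => /eqP; lia.
pose J := m.+1 %/ 4.
have n_split : m.+1 = J * 4 + m.+1 %% 4 by rewrite /J -divn_eq.
have mod_lt := ltn_pmod m.+1 (isT : 0 < 4).
have grow j : j <= J -> (Z.of_nat (2 ^ j) <= Z.abs (excess (y1 + j)))%Z.
  elim: j => [_|j IHj j_lt].
    by rewrite addn0 expn0; move: neq_y1; rewrite /excess => /eqP; lia.
  rewrite expnS addnS Nat2Z.inj_mul.
  by apply: excess_doubles (IHj (ltnW j_lt)); have := expn_gt0 2 j; lia.
have := grow J (leqnn J); have := @excess_abs_le (y1 + J); have := @lin_lt_exp2 J.
lia.
Qed.

End DegreeGap.

Lemma nedges_le_of_cards m k (G H : rel 'I_m.+1) (f g : 'I_(m.+1 - k) -> 'I_m.+1) :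
  20 <= m.+1 -> 400 * (k * k) <= m.+1 -> simple_graph G -> simple_graph H ->
  injective f -> injective g ->
  (forall i y, num_deg_ge (card_del G (f i)) y = num_deg_ge (card_del H (g i)) y) ->
  nedges G <= nedges H.
Proof.
move=> n_large k_small G_simple H_simple f_inj g_inj cards_eq.
rewrite leqNgt; apply/negP => lt_HG.
have deg_gap i : deg H (g i) < deg G (f i).
  by have := nedges_deg_card_del G_simple H_simple (cards_eq i); lia.
have : \sum_(y < m.+1) num_deg_ge G y = \sum_(y < m.+1) num_deg_ge H y.
  apply: eq_bigr => y _.
  exact: num_deg_ge_eq G_simple H_simple f_inj g_inj cards_eq deg_gap n_large k_small y.
rewrite !sum_num_deg_ge // !handshake //; lia.
Qed.

Theorem theorem1 :
  exists N : nat, forall m k : nat, N <= m.+1 -> 400 * k ^ 2 <= m.+1 ->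
  forall (G H : rel 'I_m.+1) (C : 'I_(m.+1 - k) -> rel 'I_m),
    simple_graph G -> simple_graph H -> (forall i, simple_graph (C i)) ->
    (exists f : 'I_(m.+1 - k) -> 'I_m.+1, injective f /\
        forall i, graph_iso (card_del G (f i)) (C i)) ->
    (exists g : 'I_(m.+1 - k) -> 'I_m.+1, injective g /\
        forall i, graph_iso (card_del H (g i)) (C i)) ->
    nedges G = nedges H.
Proof.
exists 20 => m k n_large; rewrite -mulnn => k_small G H C G_simple H_simple _.
move=> [f [f_inj G_cards]] [g [g_inj H_cards]]; apply/eqP.
have cards_eq i y : num_deg_ge (card_del G (f i)) y = num_deg_ge (card_del H (g i)) y.
  by rewrite (iso_num_deg_ge y (G_cards i)) (iso_num_deg_ge y (H_cards i)).
rewrite eqn_leq (nedges_le_of_cards n_large k_small G_simple H_simple f_inj g_inj) //.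
by rewrite (nedges_le_of_cards n_large k_small H_simple G_simple g_inj f_inj).
Qed.
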